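(* Let $\mathcal{C}=(\mathcal{N},\Omega,P)$ satisfy exchangeability (if state $\omega'$ permutes $\omega$ then $P(\omega')=P(\omega)$) and the information assumption: (a) if $s_i=s^0$ then $P(v,s)=P(v,s_{-i})P(s_i)$, and (b) if $s_i\neq s^0$ then $V_i^d(s)>0$ if and only if $V_i^d(s_i)>0$. Then, for any state $\omega=(v,s)\in\Omega$, $P(\omega)=\lambda^{M(s)}(1-\lambda)^{n-M(s)}\sum_{s'\in C(s)}P_{\mathcal{I}}(v,s')$. Moreover, if $\sigma\in\Sigma^*$, then in each term of $\Pi_i(\mathcal{C},\sigma)=\sum_{g=0}^{\tau}\sum_{m=g}^{\tau+g}p_i(\sigma\mid g,m)P(M=m\mid S_i=s^0)Z(g,m)$, $P(M=m\mid S_i=s^0)$ depends only on $\lambda$, $p_i(\sigma\mid g,m)$ depends only on $\sigma$, and $Z(g,m)$ depends only on $P_{\mathcal{I}}$.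
   Context: $n$ voters (odd), $\tau=\frac{n-1}{2}$, two policies $p^*,p_*$ chosen by simple majority; finite state space $\Omega=\mathcal{V}^n\times\mathcal{S}^n$ with signal set $\mathcal{S}=\{s^0,\dots,s^K\}$, informative signals $\mathcal{M}=\{s^1,\dots,s^K\}$; $V_i^d=V_i^{p^*}-V_i^{p_*}$ and $V_i^d(E)$ its conditional expectation given event $E$. $\lambda=P(S_i\in\mathcal{M})$; $P_{\mathcal{I}}(\cdot)=P(\cdot\mid S\in\mathcal{M}^n)$; $M(s)$ is the number of voters with informative signals; $I(s)$ the set of such voters; $C(s)=\{s'\in\mathcal{M}^n: s'_i=s_i\ \forall i\in I(s)\}$. $\Sigma^*$ is the set of strategy profiles in which voters with good news (signals $s^k$ with $V_i^d(S_i=s^k)>0$) vote $p^*$ and voters with bad news vote $p_*$; $\sigma_i$ is voter $i$'s probability of voting $p^*$ on $s^0$. $\Pi_i(\mathcal{C},\sigma)$ is the expected payoff difference between voting $p^*$ and $p_*$ for voter $i$ with signal $s^0$; $p_i(\sigma\mid g,m)$ is the probability that exactly $\tau$ of the other voters vote $p^*$ given $G=g$ others with good news, $M=m$ others informed, and $S_i=s^0$; $Z(g,m)=P(G=g\mid M=m)V_i^d(G=g,M=m,S_i=s^0)$. *)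

From HB Require Import structures.
From mathcomp Require Import all_boot all_order all_fingroup all_algebra.
Set Implicit Arguments. Unset Strict Implicit. Unset Printing Implicit Defensive.
Import Order.TTheory GRing.Theory Num.Theory.
Local Open Scope ring_scope.

Section Voting.
Variable R : realFieldType.
(* n = 2 tau + 1 voters (n odd, tau = (n-1)/2) *)
Variable tau : nat.
(* Vt = the finite valuation set V; signals S = {s^0,...,s^K} = 'I_K.+1, s^0 = ord0 *)
Variables (Vt : finType) (K : nat).
(* Vd x = V^{p*} - V^{p_*} for a voter whose valuation is x *)
Variable Vd : Vt -> R.

Local Notation nv := (tau.*2.+1).
Local Notation voter := 'I_nv.
Local Notation Sig := 'I_K.+1.
Local Notation s0 := (ord0 : Sig).
Local Notation sigs := {ffun voter -> Sig}.
Local Notation Omega := ({ffun voter -> Vt} * {ffun voter -> Sig})%type.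

Definition Pr (P : Omega -> R) (E : pred Omega) : R := \sum_(w : Omega | E w) P w.
Definition condE (P : Omega -> R) (X : Omega -> R) (E : pred Omega) : R :=
  (\sum_(w : Omega | E w) P w * X w) / Pr P E.

Definition Vdi (i : voter) (w : Omega) : R := Vd (w.1 i).

Definition exchangeable (P : Omega -> R) : Prop :=
  forall (pi : {perm 'I_nv}) (w : Omega),
    P ([ffun j => w.1 (pi j)], [ffun j => w.2 (pi j)]) = P w.

Definition info_a (P : Omega -> R) : Prop :=
  forall (i : voter) (w : Omega), w.2 i = s0 ->
    P w = Pr P [pred w' : Omega | (w'.1 == w.1) &&
                   [forall j, (j != i) ==> (w'.2 j == w.2 j)]]
          * Pr P [pred w' : Omega | w'.2 i == s0].

(* information assumption (b): if s_i <> s^0 then V_i^d(s) > 0 iff V_i^d(s_i) > 0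
   (for signal profiles s of positive probability, where V_i^d(s) is defined) *)
Definition info_b (P : Omega -> R) : Prop :=
  forall (i : voter) (s : sigs), s i != s0 ->
    0 < Pr P [pred w : Omega | w.2 == s] ->
    (0 < condE P (Vdi i) [pred w : Omega | w.2 == s] <->
     0 < condE P (Vdi i) [pred w : Omega | w.2 i == s i]).

Definition model (P : Omega -> R) : Prop :=
  [/\ forall w, 0 <= P w, \sum_(w : Omega) P w = 1,
      exchangeable P, info_a P & info_b P].

(* lambda = P(S_i in M) (computed at voter 0; independent of i by exchangeability) *)
Definition lambda (P : Omega -> R) : R := Pr P [pred w : Omega | w.2 ord0 != s0].

Definition informed (s : sigs) : {set voter} := [set j | s j != s0].
Definition nM (s : sigs) : nat := #|informed s|.

Definition allinf : pred Omega := [pred w : Omega | [forall j, w.2 j != s0]].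
Definition PI (P : Omega -> R) (w : Omega) : R :=
  if allinf w then P w / Pr P allinf else 0.

Definition Cset (s : sigs) : pred sigs :=
  [pred s' : sigs | [forall j, s' j != s0] &&
                    [forall j, (j \in informed s) ==> (s' j == s j)]].

Definition good (P : Omega -> R) (j : voter) (k : Sig) : bool :=
  (k != s0) && (0 < condE P (Vdi j) [pred w : Omega | w.2 j == k]).

Definition Gcnt (P : Omega -> R) (i : voter) (w : Omega) : nat :=
  #|[set j | (j != i) && good P j (w.2 j)]|.
Definition Mcnt (i : voter) (w : Omega) : nat :=
  #|[set j | (j != i) && (w.2 j != s0)]|.
Definition unin_others (i : voter) (w : Omega) : {set voter} :=
  [set j | (j != i) && (w.2 j == s0)].

(* profiles in Sigma^*: determined by sigma_j in [0,1], the probability that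
   voter j votes p* on signal s^0 (good news -> p*, bad news -> p_* ) *)
Definition sigma_star (sigma : voter -> R) : Prop :=
  forall j, 0 <= sigma j <= 1.

(* probability, in state w, that exactly tau of the other voters vote p*
   under the profile of Sigma^* given by sigma (good-news voters vote p*,
   bad-news voters vote p_*, uninformed voters j vote p* w.p. sigma_j,
   independently) *)
Definition pivprob (P : Omega -> R) (sigma : voter -> R) (i : voter)
    (w : Omega) : R :=
  \sum_(A : {set voter} | (A \subset unin_others i w) &&
                          (Gcnt P i w + #|A| == tau)%N)
    ((\prod_(j in A) sigma j) * \prod_(j in unin_others i w :\: A) (1 - sigma j)).

Definition Si0 (i : voter) : pred Omega := [pred w : Omega | w.2 i == s0].

Definition Ev (P : Omega -> R) (i : voter) (g m : nat) : pred Omega :=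
  [pred w : Omega | (Gcnt P i w == g) && (Mcnt i w == m) && (w.2 i == s0)].

Definition p_piv (P : Omega -> R) (sigma : voter -> R) (i : voter) (g m : nat) : R :=
  (\sum_(w : Omega | Ev P i g m w) P w * pivprob P sigma i w) / Pr P (Ev P i g m).

Definition probM (P : Omega -> R) (i : voter) (m : nat) : R :=
  Pr P [pred w : Omega | (Mcnt i w == m) && (w.2 i == s0)]
  / Pr P (Si0 i).

Definition Zf (P : Omega -> R) (i : voter) (g m : nat) : R :=
  Pr P [pred w : Omega | (Gcnt P i w == g) && (Mcnt i w == m)]
  / Pr P [pred w : Omega | Mcnt i w == m]
  * condE P (Vdi i) (Ev P i g m).

End Voting.

(* Assumption (a), together with exchangeability (which gives P(S_i = s^0) = 1 - lambda
   for every voter i), peels the uninformed voters off a state one at a time.  This shows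
   that P is the law of the following experiment: draw the set I of informed voters by
   independent lambda-coins, draw (v, s') from P_I, and erase the signals s'_j, j outside I.
   Every P-expectation is therefore a P_I-average of a binomially weighted sum over I.
   In P(M = m | S_i = s^0) only the binomial weights survive; in Z(g, m) they cancel in
   each ratio, and the good/bad news classification is itself a P_I-conditional
   expectation.  Finally, exchangeability under the transpositions fixing i makes the set
   of uninformed other voters uniformly distributed, given G = g, M = m and S_i = s^0,
   among the sets of size 2 tau - m avoiding i; so p_i(sigma | g, m) is the average over
   those sets of the pivot probability, a function of sigma alone. *)

From HB Require Import structures.
From mathcomp Require Import all_boot all_order all_fingroup all_algebra.
From mathcomp Require Import ring.
Set Implicit Arguments. Unset Strict Implicit. Unset Printing Implicit Defensive.
Import Order.TTheory GRing.Theory Num.Theory.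
Local Open Scope ring_scope.

Section BernoulliSets.
Variables (T : finType) (R : comPzRingType).
Implicit Types (l : R) (I J : {set T}) (m : nat).

Definition bern l I : R := \prod_j (if j \in I then l else 1 - l).

Definition bernk l k : R := l ^+ k * (1 - l) ^+ (#|T| - k).

Lemma bernE l I : bern l I = bernk l #|I|.
Proof.
rewrite /bern (bigID (mem I)) /= (eq_bigr (fun=> l)) => [|j ->//].
rewrite [X in _ * X](eq_bigr (fun=> 1 - l)) => [|j jI]; last by rewrite (negbTE jI).
rewrite !prodr_const /bernk -(cardsC I) addKn.
by congr (_ * _ ^+ _); apply: eq_card => j; rewrite !inE.
Qed.

Lemma sum_bern l : \sum_I bern l I = 1.
Proof.
rewrite -(@bigA_distr R 0 1 *%R +%R T (fun=> l) (fun=> 1 - l)) /=.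
by rewrite big1 // => j _; rewrite subrKC.
Qed.

Lemma sum_bern_mem l j : \sum_I bern l I * (j \in I)%:R = l.
Proof.
have := @bigA_distr R 0 1 *%R +%R T (fun=> l) (fun k => if k == j then 0 else 1 - l).
rewrite (bigD1 j) //= eqxx addr0 big1 => [|k /negbTE->]; last by rewrite subrKC.
rewrite mulr1 => E; rewrite [RHS]E; apply: eq_bigr => I _; rewrite /bern.
have [jI|jI] := boolP (j \in I); last by rewrite mulr0 (bigD1 j) //= (negbTE jI) eqxx mul0r.
by rewrite mulr1; apply: eq_bigr => k _; case: eqP => [->|]; rewrite ?jI.
Qed.

Lemma sum_bern0 (F : {set T} -> R) : \sum_I bern 0 I * F I = F set0.
Proof.
rewrite (bigD1 set0) //= big1 => [|I nI].
  by rewrite /bern big1 ?mul1r ?addr0 // => j; rewrite inE subr0.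
by have [j jI] := set0Pn _ nI; rewrite /bern (bigD1 j) //= jI !mul0r.
Qed.

Lemma setD1_notin (i : T) I : i \notin I -> I :\ i = I.
Proof. by move=> iI; apply/setDidPl; rewrite disjoint_sym disjoints1. Qed.

Lemma big_set_setU1 (i : T) (h : {set T} -> R) :
  \sum_(I : {set T}) h I = \sum_(I : {set T} | i \notin I) (h I + h (i |: I)).
Proof.
rewrite (bigID (fun I : {set T} => i \in I)) /= addrC big_split /=; congr (_ + _).
rewrite (reindex_onto (fun I : {set T} => i |: I) (fun I : {set T} => I :\ i)); last first.
  by move=> I; apply: setD1K.
apply: eq_bigl => I; rewrite setU11 /=; apply/eqP/idP => [<-|iI]; last exact: setU1K.
by rewrite !inE eqxx.
Qed.

Lemma sum_bern_setD1 l i m (X : {set T} -> R) :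
  \sum_I bern l I * ((#|I :\ i| == m)%:R * X (I :\ i)) =
  (bernk l m + bernk l m.+1) * \sum_(J : {set T} | (i \notin J) && (#|J| == m)) X J.
Proof.
rewrite (big_set_setU1 i) big_mkcondr mulr_sumr; apply: eq_bigr => I iI.
rewrite setU1K // (setD1_notin iI) !bernE cardsU1 iI add1n.
by case: eqP => [->|_]; rewrite ?mul0r ?mulr0 ?addr0 // !mul1r mulrDl.
Qed.

Lemma sum_bern_notin_setD1 l i m (X : {set T} -> R) :
  \sum_I bern l I * (((i \notin I) && (#|I :\ i| == m))%:R * X (I :\ i)) =
  bernk l m * \sum_(J : {set T} | (i \notin J) && (#|J| == m)) X J.
Proof.
rewrite (big_set_setU1 i) big_mkcondr mulr_sumr; apply: eq_bigr => I iI.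
rewrite setU11 mul0r mulr0 addr0 iI (setD1_notin iI) bernE.
by case: eqP => [->|_]; rewrite ?mul0r ?mulr0 // !mul1r.
Qed.

End BernoulliSets.

Lemma bernk_gt0 (T : finType) (R : numDomainType) (l : R) k : 0 < l < 1 -> 0 < bernk T l k.
Proof. by case/andP=> l0 l1; rewrite /bernk mulr_gt0 ?exprn_gt0 ?subr_gt0. Qed.

Lemma div_mul2l (F : fieldType) (c a b : F) : c != 0 -> c * a / (c * b) = a / b.
Proof. by move=> c0; rewrite -mulf_div divff ?mul1r. Qed.

Lemma tperm_invariant_card (T : finType) (U : Type) (i : T) (Q : {set T} -> U) :
    (forall a b (A : {set T}), a != i -> b != i -> Q (tperm a b @^-1: A) = Q A) ->
  forall A B : {set T}, i \notin A -> i \notin B -> #|A| = #|B| -> Q A = Q B.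
Proof.
move=> Qtperm A B; move Hk: #|A :\: B| => k.
elim: k A Hk => [|k IHk] A Hk iA iB cAB.
  have sAB : A \subset B by rewrite -setD_eq0 -cards_eq0 Hk.
  by congr Q; apply/eqP; rewrite eqEcard sAB cAB leqnn.
have cBA : #|B :\: A| = k.+1.
  by apply/eqP; rewrite -(eqn_add2l #|B :&: A|) cardsID setIC -Hk cardsID cAB.
have [a /setDP[aA aB]] : exists a, a \in A :\: B by apply/set0Pn; rewrite -card_gt0 Hk.
have [b /setDP[bB bA]] : exists b, b \in B :\: A by apply/set0Pn; rewrite -card_gt0 cBA.
have ai : a != i by apply: contraNneq iA => <-.
have bi : b != i by apply: contraNneq iB => <-.
rewrite -(Qtperm a b A ai bi); apply: IHk => //.
- have -> : tperm a b @^-1: A :\: B = (A :\: B) :\ a.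
    apply/setP => x; rewrite !inE.
    case: tpermP => [->|->|/eqP/negbTE-> _]; rewrite ?eqxx ?(negbTE bA) ?(negbTE aB) ?bB ?andbF //.
  by have := cardsD1 a (A :\: B); rewrite inE aA aB Hk add1n => -[].
- by rewrite inE tpermD // eq_sym.
- by rewrite card_preimset //; apply: perm_inj.
Qed.

Section Voting.
Variables (R : realFieldType) (tau : nat) (Vt : finType) (K : nat) (Vd : Vt -> R).

Local Notation nv := (tau.*2.+1).
Local Notation voter := 'I_nv.
Local Notation Sig := 'I_K.+1.
Local Notation s0 := (ord0 : Sig).
Local Notation sigs := {ffun voter -> Sig}.
Local Notation Omega := ({ffun voter -> Vt} * {ffun voter -> Sig})%type.
Local Notation allinf := (@allinf tau Vt K).

Implicit Types (l : R) (P : Omega -> R) (w : Omega) (s : sigs) (A I J U : {set voter})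
  (i j : voter) (k : Sig) (g m : nat).

Definition sig_upd s i k : sigs := [ffun j => if j == i then k else s j].

Definition restr s I : sigs := [ffun j => if j \in I then s j else s0].

Lemma Cset_allinf s s' : Cset s s' -> [forall j, s' j != s0].
Proof. by case/andP. Qed.

Lemma Cset_sig_upd s i k s' : s i = s0 -> k != s0 ->
  Cset (sig_upd s i k) s' = Cset s s' && (s' i == k).
Proof.
move=> si k0; rewrite /Cset /= -andbA; congr (_ && _).
apply/forallP/andP => [Hupd|[/forallP Hs /eqP <-]].
  have := Hupd i; rewrite !inE !ffunE eqxx k0 /= => ski; split=> //.
  apply/forallP => j; have := Hupd j; rewrite !inE !ffunE.
  by case: (eqVneq j i) => [->|//]; rewrite si eqxx.
move=> j; rewrite inE !ffunE; case: (eqVneq j i) => [->|_]; first by rewrite eqxx implybT.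
by have := Hs j; rewrite inE.
Qed.

Lemma big_Cset_sig_upd s i (F : sigs -> R) : s i = s0 ->
  \sum_(s' | Cset s s') F s' = \sum_(k | k != s0) \sum_(s' | Cset (sig_upd s i k) s') F s'.
Proof.
move=> si; rewrite (partition_big (fun s' : sigs => s' i) (fun k => k != s0)).
  by apply: eq_bigr => k k0; apply: eq_bigl => s'; rewrite Cset_sig_upd.
by move=> s' /Cset_allinf/forallP.
Qed.

Lemma uninformed_sig_upd s i k : s i = s0 -> k != s0 ->
  ~: informed (sig_upd s i k) = (~: informed s) :\ i.
Proof.
move=> si k0; apply/setP => j; rewrite !inE !ffunE.
by case: (eqVneq j i) => [->|_]; rewrite ?k0 ?si ?eqxx.
Qed.

Lemma Cset_full s s' : ~: informed s = set0 -> Cset s s' = (s' == s).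
Proof.
move=> /setP full.
have s_inf j : s j != s0 by have := full j; rewrite !inE negbK => ->.
apply/andP/eqP => [[_ /forallP Hs]|->].
  by apply/ffunP => j; have := Hs j; rewrite inE s_inf => /eqP.
by split; apply/forallP => j; rewrite ?s_inf ?eqxx ?implybT.
Qed.

Lemma informed_restr s' I : [forall j, s' j != s0] -> informed (restr s' I) = I.
Proof.
move=> /forallP s'_inf; apply/setP => j; rewrite !inE ffunE.
by case: (j \in I); rewrite ?s'_inf ?eqxx.
Qed.

Lemma restr_eq_s0 s' I j : [forall j, s' j != s0] -> (restr s' I j == s0) = (j \notin I).
Proof. by move=> /(informed_restr I)/setP/(_ j); rewrite !inE => <-; rewrite negbK. Qed.

Lemma sum_Cset_restr s' (H : sigs -> R) : [forall j, s' j != s0] ->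
  \sum_(s | Cset s s') H s = \sum_I H (restr s' I).
Proof.
move=> s'_inf; rewrite (reindex_onto (restr s') (@informed tau K)) => [|s /andP[_ /forallP Hs]].
  apply: eq_bigl => I; rewrite informed_restr // eqxx andbT /Cset /= s'_inf.
  by apply/forallP => j; rewrite informed_restr // ffunE; apply/implyP => ->.
apply/ffunP => j; rewrite ffunE; have := Hs j; rewrite inE.
by case: (eqVneq (s j) s0) => [->|_ /eqP].
Qed.

Lemma exchange_Cset (G X : sigs -> R) :
  \sum_s G s * \sum_(s' | Cset s s') X s' = \sum_s' X s' * \sum_(s | Cset s s') G s.
Proof.
under eq_bigr do rewrite mulr_sumr big_mkcond.
rewrite exchange_big; apply: eq_bigr => s' _; rewrite mulr_sumr [RHS]big_mkcond /=.
by apply: eq_bigr => s _; case: (Cset s s'); rewrite // mulrC.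
Qed.

Lemma sum_Cset_bern l s' :
  \sum_(s | Cset s s') bern l (informed s) = [forall j, s' j != s0]%:R.
Proof.
have [s'_inf|s'_ninf] := boolP [forall j, s' j != s0].
  by rewrite sum_Cset_restr //; under eq_bigr do rewrite informed_restr //; rewrite sum_bern.
by rewrite big_pred0 // => s; apply: contraNF s'_ninf => /Cset_allinf.
Qed.



Lemma card_informedC s : (#|informed s| + #|~: informed s|)%N = nv.
Proof. by rewrite cardsC card_ord. Qed.

Lemma card_uninformed s : (nv - #|informed s|)%N = #|~: informed s|.
Proof. by move: (card_informedC s); move: #|_| #|_| => a b <-; rewrite addKn. Qed.

Lemma PrE P (E : pred Omega) : Pr P E = \sum_w P w * (E w)%:R.
Proof. by rewrite /Pr big_mkcond; apply: eq_bigr => w _; case: (E w); rewrite ?mulr1 ?mulr0. Qed.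

Lemma condEE P X (E : pred Omega) :
  condE P X E = (\sum_w P w * ((E w)%:R * X w)) / Pr P E.
Proof.
rewrite /condE big_mkcond; congr (_ / _); apply: eq_bigr => w _.
by case: (E w); rewrite ?mul1r ?mul0r ?mulr0.
Qed.

Lemma sum_state (F : Omega -> R) : \sum_w F w = \sum_v \sum_s F (v, s).
Proof. by rewrite pair_bigA; apply: eq_bigr => -[]. Qed.

Definition perm_state (pi : {perm voter}) w : Omega :=
  ([ffun j => w.1 (pi j)], [ffun j => w.2 (pi j)]).

Lemma perm_state_inj pi : injective (perm_state pi).
Proof.
move=> [v s] [v' s'] [/ffunP Ev /ffunP Es]; congr pair; apply/ffunP => j.
  by have := Ev ((pi^-1)%g j); rewrite !ffunE permKV.
by have := Es ((pi^-1)%g j); rewrite !ffunE permKV.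
Qed.

Lemma sum_perm_state P pi (F : Omega -> R) : exchangeable P ->
  \sum_w P w * F w = \sum_w P w * F (perm_state pi w).
Proof.
by move=> Pex; rewrite (reindex_inj (@perm_state_inj pi)); apply: eq_bigr => w _; rewrite Pex.
Qed.

Definition ngood (gd : voter -> Sig -> bool) J s : nat := #|[set j in J | gd j (s j)]|.

Lemma good_s0 P j : good Vd P j s0 = false.
Proof. by rewrite /good eqxx. Qed.

Lemma Gcnt_restr P i v s' I : Gcnt Vd P i (v, restr s' I) = ngood (good Vd P) (I :\ i) s'.
Proof.
apply: eq_card => j; rewrite !inE /= ffunE.
by case: ifP => _; rewrite ?good_s0 ?andbT ?andbF.
Qed.

Lemma Mcnt_informed i w : Mcnt i w = #|informed w.2 :\ i|.
Proof. by apply: eq_card => j; rewrite !inE. Qed.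

Lemma card_unin_others i w : #|unin_others i w| = (tau.*2 - Mcnt i w)%N.
Proof.
have := cardsID [set j | w.2 j == s0] [set~ i]; rewrite cardsC1 card_ord /=.
have -> : [set~ i] :&: [set j | w.2 j == s0] = unin_others i w.
  by apply/setP => j; rewrite !inE.
have -> : #|[set~ i] :\: [set j | w.2 j == s0]| = Mcnt i w.
  by rewrite /Mcnt; apply: eq_card => j; rewrite !inE andbC.
by move: #|unin_others i w| (Mcnt i w) => a b <-; rewrite addnK.
Qed.

Definition unin_class (i : voter) m A := (i \notin A) && (#|A| == tau.*2 - m)%N.

Definition piv_unin (sigma : voter -> R) (g : nat) (U : {set voter}) : R :=
  \sum_(A : {set voter} | (A \subset U) && (g + #|A| == tau)%N)
    ((\prod_(j in A) sigma j) * \prod_(j in U :\: A) (1 - sigma j)).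

Lemma others_perm_state (pi : {perm voter}) i w (p : voter -> Sig -> bool) :
    pi i = i -> (forall j k, p (pi j) k = p j k) ->
  [set j | (j != i) && p j ((perm_state pi w).2 j)] =
  pi @^-1: [set j | (j != i) && p j (w.2 j)].
Proof.
move=> pii p_pi; apply/setP => j; rewrite !inE /= ffunE p_pi.
by rewrite -{2}pii (inj_eq perm_inj).
Qed.

Definition sum_others (pi : Omega -> R) i m (X : Omega -> {set voter} -> R) : R :=
  \sum_w pi w * \sum_(J : {set voter} | (i \notin J) && (#|J| == m)) X w J.

Definition Z_PI (pi : Omega -> R) (gd : voter -> Sig -> bool) i g m : R :=
  sum_others pi i m (fun w J => (ngood gd J w.2 == g)%:R) /
  sum_others pi i m (fun _ _ => 1) *
  (sum_others pi i m (fun w J => (ngood gd J w.2 == g)%:R * Vd (w.1 i)) /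
   sum_others pi i m (fun w J => (ngood gd J w.2 == g)%:R)).

Lemma eq_Z_PI pi pi' gd gd' i g m :
  pi =1 pi' -> gd =2 gd' -> Z_PI pi gd i g m = Z_PI pi' gd' i g m.
Proof.
move=> epi egd; have eG J s : ngood gd J s = ngood gd' J s.
  by apply: eq_card => j; rewrite !inE egd.
rewrite /Z_PI /sum_others; congr (_ / _ * (_ / _)); apply: eq_bigr => w _.
all: by rewrite epi; congr (_ * _); apply: eq_bigr => J _; rewrite ?eG.
Qed.

Definition probM_bern l (i : voter) (m : nat) : R :=
  (\sum_I bern l I * ((#|I :\ i| == m) && (i \notin I))%:R) / \sum_I bern l I * (i \notin I)%:R.

Section Model.
Variable P : Omega -> R.
Hypothesis HP : model Vd P.

Let P_ge0 w : 0 <= P w. Proof. by case: HP. Qed.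
Let P_sum1 : \sum_w P w = 1. Proof. by case: HP. Qed.
Let P_exch : exchangeable P. Proof. by case: HP. Qed.

Lemma lambda_ge0 : 0 <= lambda P.
Proof. exact: sumr_ge0. Qed.

Lemma Pr_informed j : Pr P [pred w : Omega | w.2 j != s0] = lambda P.
Proof.
rewrite /lambda !PrE [RHS](sum_perm_state (tperm ord0 j) _ P_exch).
by apply: eq_bigr => w _; rewrite /= ffunE tpermL.
Qed.

Lemma Pr_Si0 i : Pr P (Si0 i) = 1 - lambda P.
Proof.
rewrite -(Pr_informed i) -P_sum1 !PrE -sumrB; apply: eq_bigr => w _ /=.
by rewrite /Si0 /=; case: eqP; rewrite ?mulr0 ?mulr1 ?subr0 ?subrr.
Qed.

Lemma P_sum_sig_upd v s i : s i = s0 ->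
  P (v, s) = (\sum_k P (v, sig_upd s i k)) * (1 - lambda P).
Proof.
case: HP => _ _ _ Pa _ si; rewrite {1}(Pa i (v, s) si) -(Pr_Si0 i); congr (_ * _).
rewrite /Pr (reindex_onto (fun k => (v, sig_upd s i k)) (fun w : Omega => w.2 i)).
  apply: eq_big => [k|k _] //=; rewrite eqxx /= ffunE eqxx eqxx andbT.
  by apply/forallP => j; apply/implyP => /negbTE ji; rewrite ffunE ji.
case=> v' s' /= /andP[/eqP -> /forallP s's]; congr pair; apply/ffunP => j.
by rewrite ffunE; case: eqP => [->//|/eqP ji]; have /implyP/(_ ji)/eqP := s's j.
Qed.

Lemma P_peel v s i : s i = s0 ->
  lambda P * P (v, s) = (1 - lambda P) * \sum_(k | k != s0) P (v, sig_upd s i k).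
Proof.
move=> si; have := P_sum_sig_upd v si; rewrite (bigD1 s0) //=.
have -> : sig_upd s i s0 = s by apply/ffunP => j; rewrite ffunE; case: eqP => // ->.
set p := P (v, s); set X := \sum_(k | _) _ => E; apply/eqP; rewrite -subr_eq0.
have -> : lambda P * p - (1 - lambda P) * X = p - (p + X) * (1 - lambda P) by ring.
by rewrite -E subrr.
Qed.

Lemma P_Cset v s :
  P (v, s) * lambda P ^+ #|~: informed s| =
  (1 - lambda P) ^+ #|~: informed s| * \sum_(s' | Cset s s') P (v, s').
Proof.
move Hu: #|~: informed s| => u; elim: u s Hu => [|u IHu] s Hu.
  move/eqP: Hu; rewrite cards_eq0 => /eqP full.
  by rewrite !expr0 mulr1 mul1r (eq_bigl _ _ (fun s' => Cset_full s' full)) big_pred1_eq.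
have [i] : exists i, i \in ~: informed s by apply/set0Pn; rewrite -card_gt0 Hu.
rewrite !inE negbK => /eqP si.
rewrite exprS mulrA (mulrC (P _)) (P_peel v si) -mulrA mulr_suml (big_Cset_sig_upd _ si).
rewrite exprS -mulrA; congr (_ * _); rewrite mulr_sumr; apply: eq_bigr => k k0; rewrite IHu //.
by have := cardsD1 i (~: informed s); rewrite !inE si eqxx Hu uninformed_sig_upd // => -[].
Qed.

Lemma Pr_allinf : Pr P allinf = lambda P ^+ nv.
Proof.
rewrite -[RHS]mulr1 -P_sum1 mulr_sumr PrE !sum_state; apply: eq_bigr => v _.
transitivity (\sum_s bern (lambda P) (informed s) * \sum_(s' | Cset s s') P (v, s')).
  by rewrite exchange_Cset; apply: eq_bigr => s' _; rewrite sum_Cset_bern.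
apply: eq_bigr => s _; rewrite bernE /bernk card_ord card_uninformed -mulrA -P_Cset.
by rewrite mulrCA -exprD card_informedC mulrC.
Qed.

Section PositiveLambda.
Hypothesis lambda_gt0 : 0 < lambda P.

Let lambda_neq0 : lambda P != 0. Proof. exact: lt0r_neq0. Qed.

Lemma P_mixture v s :
  P (v, s) = bern (lambda P) (informed s) * \sum_(s' | Cset s s') PI P (v, s').
Proof.
have PIE s' : Cset s s' -> PI P (v, s') = P (v, s') / lambda P ^+ nv.
  by move=> /Cset_allinf s'_inf; rewrite /PI Pr_allinf /allinf /= s'_inf.
rewrite (eq_bigr _ PIE) -mulr_suml bernE /bernk card_ord card_uninformed.
rewrite -[in X in _ / X](card_informedC s) exprD.
have a0 : lambda P ^+ #|informed s| != 0 by rewrite expf_neq0.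
have b0 : lambda P ^+ #|~: informed s| != 0 by rewrite expf_neq0.
transitivity (P (v, s) * lambda P ^+ #|~: informed s| * lambda P ^+ #|informed s| /
              (lambda P ^+ #|informed s| * lambda P ^+ #|~: informed s|)).
  by field; rewrite a0 b0.
by rewrite P_Cset; field; rewrite a0 b0.
Qed.

Lemma sum_mixture (F : Omega -> R) :
  \sum_w P w * F w = \sum_w PI P w * \sum_I bern (lambda P) I * F (w.1, restr w.2 I).
Proof.
rewrite !sum_state; apply: eq_bigr => v _.
under eq_bigr => s _ do rewrite P_mixture mulrAC.
rewrite (exchange_Cset _ (fun s' => PI P (v, s'))); apply: eq_bigr => s' _ /=.
have [s'_inf|s'_ninf] := boolP [forall j, s' j != s0].
  by rewrite sum_Cset_restr //; congr (_ * _); apply: eq_bigr => I _; rewrite informed_restr.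
by rewrite /PI /allinf /= (negbTE s'_ninf) !mul0r.
Qed.

Lemma sum_mixture_factor (F G : Omega -> R) c :
    (forall w, allinf w -> \sum_I bern (lambda P) I * F (w.1, restr w.2 I) = c * G w) ->
  \sum_w P w * F w = c * \sum_w PI P w * G w.
Proof.
move=> FG; rewrite sum_mixture mulr_sumr; apply: eq_bigr => w _.
have [w_inf|w_ninf] := boolP (allinf w); first by rewrite FG // mulrCA.
by rewrite /PI (negbTE w_ninf) !mul0r mulr0.
Qed.

Lemma sum_PI : \sum_w PI P w = 1.
Proof.
rewrite -P_sum1 -[LHS]mul1r [RHS](eq_bigr (fun w => P w * 1)) => [|w _]; last by rewrite mulr1.
rewrite (@sum_mixture_factor (fun=> 1) (fun=> 1) 1) => [|w _]; last by rewrite -mulr_suml sum_bern.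
by congr (_ * _); apply: eq_bigr => w _; rewrite mulr1.
Qed.

Lemma condE_signal_PI j k : k != s0 ->
  condE P (Vdi Vd j) [pred w : Omega | w.2 j == k] =
  (\sum_w PI P w * ((w.2 j == k)%:R * Vd (w.1 j))) / \sum_w PI P w * (w.2 j == k)%:R.
Proof.
move=> k0; rewrite condEE PrE.
have restrE s' I : (restr s' I j == k)%:R = (j \in I)%:R * (s' j == k)%:R :> R.
  by rewrite ffunE; case: (j \in I); rewrite ?mul1r ?mul0r // eq_sym (negbTE k0).
rewrite (@sum_mixture_factor _ (fun w => (w.2 j == k)%:R * Vd (w.1 j)) (lambda P)).
  rewrite [X in _ / X](@sum_mixture_factor _ (fun w => (w.2 j == k)%:R) (lambda P)).
    exact: div_mul2l.
  all: move=> [v s'] _ /=; rewrite -[in RHS](sum_bern_mem (lambda P) j) mulr_suml.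
  all: by apply: eq_bigr => I _; rewrite restrE !mulrA.
Qed.

Lemma sum_mixture_others i m (F : Omega -> R) X :
    (forall v s' I, [forall j, s' j != s0] ->
       F (v, restr s' I) = (#|I :\ i| == m)%:R * X (v, s') (I :\ i)) ->
  \sum_w P w * F w =
  (bernk voter (lambda P) m + bernk voter (lambda P) m.+1) * sum_others (PI P) i m X.
Proof.
move=> FX; apply: sum_mixture_factor => -[v s'] s'_inf.
by rewrite -sum_bern_setD1; apply: eq_bigr => I _; rewrite FX.
Qed.

Lemma sum_mixture_others_notin i m (F : Omega -> R) X :
    (forall v s' I, [forall j, s' j != s0] ->
       F (v, restr s' I) = ((i \notin I) && (#|I :\ i| == m))%:R * X (v, s') (I :\ i)) ->
  \sum_w P w * F w = bernk voter (lambda P) m * sum_others (PI P) i m X.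
Proof.
move=> FX; apply: sum_mixture_factor => -[v s'] s'_inf.
by rewrite -sum_bern_notin_setD1; apply: eq_bigr => I _; rewrite FX.
Qed.

Lemma Zf_Z_PI i g m : lambda P < 1 -> Zf Vd P i g m = Z_PI (PI P) (good Vd P) i g m.
Proof.
move=> lambda_lt1; have l01 : 0 < lambda P < 1 by rewrite lambda_gt0.
rewrite /Zf /Z_PI condEE !PrE.
rewrite (@sum_mixture_others i m _ (fun w J => (ngood (good Vd P) J w.2 == g)%:R)); last first.
  move=> v s' I s'_inf; rewrite /= Gcnt_restr Mcnt_informed informed_restr //.
  by rewrite -natrM mulnb andbC.
rewrite (@sum_mixture_others i m _ (fun _ _ => 1)); last first.
  by move=> v s' I s'_inf; rewrite /= Mcnt_informed informed_restr // mulr1.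
rewrite (@sum_mixture_others_notin i m _
  (fun w J => (ngood (good Vd P) J w.2 == g)%:R * Vd (w.1 i))); last first.
  move=> v s' I s'_inf; rewrite /Ev /Vdi /= Gcnt_restr Mcnt_informed.
  rewrite informed_restr // restr_eq_s0 //.
  by rewrite mulrA -natrM mulnb andbC andbA andbAC.
rewrite (@sum_mixture_others_notin i m _
  (fun w J => (ngood (good Vd P) J w.2 == g)%:R)); last first.
  move=> v s' I s'_inf; rewrite /Ev /= Gcnt_restr Mcnt_informed.
  rewrite informed_restr // restr_eq_s0 //.
  by rewrite -natrM mulnb andbC andbA andbAC.
by rewrite !div_mul2l // lt0r_neq0 ?addr_gt0 ?bernk_gt0.
Qed.

End PositiveLambda.

Lemma sum_informed (f : {set voter} -> R) :
  \sum_w P w * f (informed w.2) = \sum_I bern (lambda P) I * f I.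
Proof.
(* If lambda = 0 then Pr P allinf = 0, so PI P is identically 0 and the mixture is
   unavailable; instead P lives on the all-uninformed states. *)
have := lambda_ge0; rewrite le0r => /orP[/eqP l0|lpos].
  rewrite l0 sum_bern0 -[RHS]mul1r -P_sum1 mulr_suml; apply: eq_bigr => w _.
  have [->//|/set0Pn[j]] := eqVneq (informed w.2) set0; rewrite inE => j_inf.
  suff -> : P w = 0 by rewrite !mul0r.
  apply/eqP; rewrite eq_le P_ge0 andbT -l0 -(Pr_informed j) /Pr (bigD1 w) //=.
  by rewrite lerDl sumr_ge0.
rewrite (@sum_mixture_factor lpos _ (fun=> 1) (\sum_I bern (lambda P) I * f I)) /=.
  by rewrite (eq_bigr (PI P)) ?sum_PI ?mulr1 // => w _; exact: mulr1.
by move=> [v s'] s'_inf /=; rewrite mulr1; apply: eq_bigr => I _; rewrite informed_restr.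
Qed.

Lemma probM_lambda i m : probM P i m = probM_bern (lambda P) i m.
Proof.
rewrite /probM /probM_bern !PrE -!sum_informed.
by congr (_ / _); apply: eq_bigr => w _; rewrite /Si0 /= ?Mcnt_informed inE negbK.
Qed.

Lemma good_perm (pi : {perm voter}) j k : good Vd P (pi j) k = good Vd P j k.
Proof.
rewrite /good !condEE !PrE [in RHS](sum_perm_state pi _ P_exch).
rewrite [in X in _ = _ && (0 < _ / X)](sum_perm_state pi _ P_exch).
by rewrite /Vdi /=; congr (_ && (0 < _ / _)); apply: eq_bigr => w _; rewrite !ffunE.
Qed.

Section FixedOthers.
Variables (i : voter) (g m : nat).
Local Notation Ev := (Ev Vd P i g m).

Lemma Ev_perm (pi : {perm voter}) w : pi i = i -> Ev (perm_state pi w) = Ev w.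
Proof.
move=> pii; rewrite /Ev /= ffunE pii /Gcnt /Mcnt.
rewrite (@others_perm_state pi i w (good Vd P) pii (good_perm pi)).
rewrite (@others_perm_state pi i w (fun _ k => k != s0) pii) //.
by rewrite !card_preimset //; apply: perm_inj.
Qed.

Lemma unin_others_perm (pi : {perm voter}) w :
  pi i = i -> unin_others i (perm_state pi w) = pi @^-1: unin_others i w.
Proof. by move=> pii; apply: (@others_perm_state pi i w (fun _ k => k == s0)). Qed.

Definition Ev_mass A := \sum_w P w * (Ev w && (unin_others i w == A))%:R.

Lemma Ev_mass_tperm a b A : a != i -> b != i -> Ev_mass (tperm a b @^-1: A) = Ev_mass A.
Proof.
move=> ai bi; have ti : tperm a b i = i by rewrite tpermD // eq_sym.
rewrite /Ev_mass [RHS](sum_perm_state (tperm a b) _ P_exch); apply: eq_bigr => w _.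
rewrite Ev_perm // unin_others_perm //; congr (_ * (_ && _)%:R).
by apply/eqP/eqP => [->|<-]; apply/setP => x; rewrite !inE tpermK.
Qed.

Lemma Ev_unin_class w : Ev w -> unin_class i m (unin_others i w).
Proof.
case/andP=> /andP[_ /eqP Mm] _.
by rewrite /unin_class card_unin_others Mm eqxx andbT inE eqxx.
Qed.

Lemma Ev_mass_eq0 A : ~~ unin_class i m A -> Ev_mass A = 0.
Proof.
move=> nA; rewrite /Ev_mass big1 // => w _.
have [/andP[/Ev_unin_class wA /eqP wAE]|] := boolP (Ev w && _); last by rewrite mulr0.
by move: nA; rewrite -wAE wA.
Qed.

Lemma Ev_mass_class A B : unin_class i m A -> unin_class i m B -> Ev_mass A = Ev_mass B.
Proof.
case/andP=> iA /eqP cA /andP[iB /eqP cB].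
by apply: (tperm_invariant_card Ev_mass_tperm) => //; rewrite cA cB.
Qed.

Lemma sum_Ev_unin (F : {set voter} -> R) :
  \sum_w P w * ((Ev w)%:R * F (unin_others i w)) = \sum_A F A * Ev_mass A.
Proof.
rewrite /Ev_mass; under [RHS]eq_bigr do rewrite mulr_sumr.
rewrite exchange_big; apply: eq_bigr => w _.
rewrite (bigD1 (unin_others i w)) //= eqxx andbT big1 ?addr0 => [|A nA].
  by rewrite mulrA mulrC.
by rewrite eq_sym (negbTE nA) andbF !mulr0.
Qed.

Lemma p_piv_uniform sigma : 0 < Pr P Ev ->
  p_piv Vd P sigma i g m =
  (\sum_(A | unin_class i m A) piv_unin sigma g A) / #|unin_class i m|%:R.
Proof.
move=> Ev_gt0; have [w Ew] : exists w, Ev w.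
  apply/existsP; apply: contraTT Ev_gt0 => /existsPn none.
  by rewrite /Pr big_pred0 ?ltxx // => w; apply/negbTE.
have sum_massE (F : {set voter} -> R) :
    \sum_A F A * Ev_mass A = Ev_mass (unin_others i w) * \sum_(A | unin_class i m A) F A.
  rewrite [in RHS]big_mkcond mulr_sumr; apply: eq_bigr => A _.
  have [cA|ncA] := boolP (unin_class i m A); last by rewrite Ev_mass_eq0 ?mulr0.
  by rewrite (Ev_mass_class cA (Ev_unin_class Ew)) mulrC.
have PrEv : Pr P Ev = \sum_A 1 * Ev_mass A.
  by rewrite PrE -(sum_Ev_unin (fun=> 1)); apply: eq_bigr => w' _; rewrite mulr1.
have mass_neq0 : Ev_mass (unin_others i w) != 0.
  by apply: contraTneq Ev_gt0 => m0; rewrite PrEv sum_massE m0 mul0r ltxx.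
rewrite /p_piv PrEv.
have -> : \sum_(w | Ev w) P w * pivprob Vd P sigma i w = \sum_A piv_unin sigma g A * Ev_mass A.
  rewrite -sum_Ev_unin big_mkcond; apply: eq_bigr => w' _.
  have [/andP[/andP[/eqP Gg _] _]|_] := boolP (Ev w'); last by rewrite mul0r mulr0.
  by rewrite mul1r /pivprob Gg.
by rewrite !sum_massE sumr_const div_mul2l.
Qed.

End FixedOthers.

End Model.

Lemma good_PI P P' : model Vd P -> model Vd P' -> 0 < lambda P -> 0 < lambda P' ->
  PI P =1 PI P' -> good Vd P =2 good Vd P'.
Proof.
move=> HP HP' l0 l0' ePI j k; have [->|k0] := eqVneq k s0; first by rewrite !good_s0.
rewrite /good (condE_signal_PI HP l0) ?(condE_signal_PI HP' l0') //.
by congr (_ && (0 < _ / _)); apply: eq_bigr => w _; rewrite ePI.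
Qed.

End Voting.

Theorem lemma1 (R : realFieldType) (tau : nat) (Vt : finType) (K : nat)
    (Vd : Vt -> R) :
  (* first claim: the formula for P(omega) *)
  (forall P : {ffun 'I_(tau.*2.+1) -> Vt} * {ffun 'I_(tau.*2.+1) -> 'I_K.+1} -> R,
     model Vd P -> 0 < lambda P ->
     forall (v : {ffun 'I_(tau.*2.+1) -> Vt}) (s : {ffun 'I_(tau.*2.+1) -> 'I_K.+1}),
       P (v, s) = lambda P ^+ nM s * (1 - lambda P) ^+ (tau.*2.+1 - nM s)
                  * \sum_(s' | Cset s s') PI P (v, s'))
  /\
  (* second claim: dependence of the terms of Pi_i(C, sigma) *)
  (forall sigma : 'I_(tau.*2.+1) -> R, sigma_star sigma ->
   forall (i : 'I_(tau.*2.+1)) (g m : nat), (g <= tau)%N -> (g <= m <= tau + g)%N ->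
     (* P(M = m | S_i = s^0) depends only on lambda *)
     (forall P P' : {ffun 'I_(tau.*2.+1) -> Vt} * {ffun 'I_(tau.*2.+1) -> 'I_K.+1} -> R,
        model Vd P -> model Vd P' -> lambda P = lambda P' ->
        0 < Pr P (Si0 i) -> 0 < Pr P' (Si0 i) ->
        probM P i m = probM P' i m)
     /\
     (* p_i(sigma | g, m) depends only on sigma *)
     (forall P P' : {ffun 'I_(tau.*2.+1) -> Vt} * {ffun 'I_(tau.*2.+1) -> 'I_K.+1} -> R,
        model Vd P -> model Vd P' ->
        0 < Pr P (Ev Vd P i g m) -> 0 < Pr P' (Ev Vd P' i g m) ->
        p_piv Vd P sigma i g m = p_piv Vd P' sigma i g m)
     /\
     (* Z(g, m) depends only on P_I *)
     (forall P P' : {ffun 'I_(tau.*2.+1) -> Vt} * {ffun 'I_(tau.*2.+1) -> 'I_K.+1} -> R,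
        model Vd P -> model Vd P' ->
        0 < lambda P < 1 -> 0 < lambda P' < 1 ->
        PI P =1 PI P' ->
        Zf Vd P i g m = Zf Vd P' i g m)).
Proof.
split=> [P HP l0 v s|sigma _ i g m _ _].
  by rewrite (P_mixture HP l0) bernE /bernk card_ord.
split; [|split].
- by move=> P P' HP HP' eql _ _; rewrite (probM_lambda HP) (probM_lambda HP') eql.
- by move=> P P' HP HP' Ev0 Ev0'; rewrite (p_piv_uniform HP _ Ev0) (p_piv_uniform HP' _ Ev0').
- move=> P P' HP HP' /andP[l0 l1] /andP[l0' l1'] ePI.
  rewrite (Zf_Z_PI HP l0 _ _ _ l1) (Zf_Z_PI HP' l0' _ _ _ l1').
  exact/eq_Z_PI/(good_PI HP HP' l0 l0' ePI).
Qed.
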